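(* Let $b\ge1$ and identify each $f\in\mathcal{M}^b$ with the base-$(b+1)$ number $\beta(f)=\sum_{i\ge0}f(i)(b+1)^i$. Then $\beta$ is a monoid homomorphism from $\mathcal{M}^b$ with multiset addition to base-$(b+1)$ numbers with lunar multiplication: $\beta(f+g)=\beta(f)\otimes\beta(g)$ for all $f,g\in\mathcal{M}^b$, and the neutral multiset (the element $0$ with multiplicity $b$) is mapped to the digit $b$, the neutral element of lunar multiplication.
   Context: $\mathcal{M}^b$ is the set of functions $f:\mathbb{N}\to\{0,\ldots,b\}$ with finite support (finite multisets with multiplicities at most $b$). The set-array representation of $f$ is $(A_1,\ldots,A_b)$ with $A_i=\{a:f(a)\ge i\}$, and multiset addition is coordinatewise: $(A_1,\ldots,A_b)+(B_1,\ldots,B_b)=(A_1+B_1,\ldots,A_b+B_b)$, where $S+T=\{s+t:s\in S,t\in T\}$ and $S+\emptyset=\emptyset$. Base-$(b+1)$ lunar product: for $x=\sum_ix_i(b+1)^i$, $y=\sum_jy_j(b+1)^j$ with digits in $\{0,\ldots,b\}$, $x\otimes y=\sum_n(\max_{i+j=n}\min(x_i,y_j))(b+1)^n$. *)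

From mathcomp Require Import all_boot.
From mathcomp Require Import finmap.
Set Implicit Arguments. Unset Strict Implicit. Unset Printing Implicit Defensive.
Local Open Scope fset_scope.

Definition fmultiset := {fsfun nat -> nat with 0%N}.

Definition inMb (b : nat) (f : fmultiset) : Prop := forall a : nat, (f a <= b)%N.

Definition set_array (f : fmultiset) (i : nat) : pred nat := fun a => (i <= f a)%N.

(* Membership of n in the sumset S + T of two subsets of nat
   (n = s + t with s in S, t in T; necessarily s <= n). *)
Definition in_sumset (S T : pred nat) (n : nat) : bool :=
  [exists s : 'I_n.+1, S s && T (n - s)%N].

(* Multiset addition in M^b: the multiset whose set-array is
   (A_1 + B_1, ..., A_b + B_b); since these sets are nested, the multiplicity
   of n is the number of indices i in {1..b} with n in A_i + B_i.
   Its support is contained in supp f + supp g. *)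
Definition ms_add (b : nat) (f g : fmultiset) : fmultiset :=
  [fsfun n in [fset (i + j)%N | i in finsupp f, j in finsupp g] =>
     \sum_(1 <= i < b.+1) in_sumset (set_array f i) (set_array g i) n].

Definition beta (b : nat) (f : fmultiset) : nat :=
  \sum_(i <- finsupp f) f i * b.+1 ^ i.

Definition digit (b x i : nat) : nat := (x %/ b.+1 ^ i) %% b.+1.

(* Base-(b+1) lunar product; all digits of x (resp. y) at positions >= x
   (resp. >= y) vanish, so positions n <= x + y cover all nonzero digits. *)
Definition lunar_mul (b x y : nat) : nat :=
  \sum_(n < (x + y).+1)
     (\max_(i < n.+1) minn (digit b x i) (digit b y (n - i))) * b.+1 ^ n.

Definition ms_unit (b : nat) : fmultiset := [fsfun n in [fset 0%N] => b].

From mathcomp Require Import all_boot.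
From mathcomp Require Import finmap.
From mathcomp Require Import zify.

(* Both sides are max-min convolutions.  Since the sets A_i are nested, the
   multiplicity of n in f + g is the number of 1 <= i <= b with
   n \in A_i + B_i, that is min(b, max_{s <= n} min(f s, g (n - s))), and the
   cap b is inactive on M^b.  The digits of beta f are the values of f, so the
   n-th digit of beta f (x) beta g is the same convolution.  Lunar
   multiplication is commutative, and the digit sequence of b is b at
   position 0 and 0 elsewhere, which is neutral for the convolution. *)

Set Implicit Arguments. Unset Strict Implicit. Unset Printing Implicit Defensive.
Local Open Scope fset_scope.
Local Open Scope nat_scope.

Section Digits.

Variable b : nat.

Lemma digit_le (x i : nat) : digit b x i <= b.
Proof. by rewrite /digit -ltnS ltn_mod. Qed.

Lemma digit_small (x i : nat) : x < b.+1 ^ i -> digit b x i = 0.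
Proof. by move=> lt_x; rewrite /digit divn_small. Qed.

Lemma digit_eq0 (x i : nat) : x <= i -> digit b x i = 0.
Proof.
move=> le_xi; have [->|b_gt0] := posnP b; first by rewrite /digit modn1.
by rewrite digit_small // (leq_ltn_trans le_xi) // ltn_expl.
Qed.

Lemma digit_self (i : nat) : digit b b i = if i == 0 then b else 0.
Proof.
case: i => [|i]; first by rewrite /digit expn0 divn1 modn_small.
by rewrite digit_small // expnS (leq_trans (ltnSn b)) // leq_pmulr ?expn_gt0.
Qed.

Lemma sum_digit_expansion (N x : nat) : x < b.+1 ^ N ->
  \sum_(n < N) digit b x n * b.+1 ^ n = x.
Proof.
suff expansion_rem :
    \sum_(n < N) digit b x n * b.+1 ^ n + b.+1 ^ N * (x %/ b.+1 ^ N) = x.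
  by move=> lt_x; move: expansion_rem; rewrite divn_small // muln0 addn0.
elim: N => [|N IH]; first by rewrite big_ord0 expn0 divn1 mul1n.
rewrite big_ord_recr /= expnSr divnMA -[in RHS]IH -addnA; congr (_ + _).
set q := x %/ b.+1 ^ N.
rewrite /digit -/q {3}(divn_eq q b.+1) mulnDr addnC mulnA mulnAC.
by congr (_ + _); rewrite mulnC.
Qed.

Lemma digit_of_expansion (N : nat) (d : nat -> nat) :
  (forall n, d n <= b) -> (forall n, N <= n -> d n = 0) ->
  digit b (\sum_(n < N) d n * b.+1 ^ n) =1 d.
Proof.
elim: N d => [|N IH] d d_le d_eq0 i.
  by rewrite big_ord0 /digit div0n mod0n d_eq0.
rewrite big_ord_recl /= expn0 muln1.
have -> : \sum_(j < N) d (lift ord0 j) * b.+1 ^ lift ord0 j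
        = (\sum_(j < N) d j.+1 * b.+1 ^ j) * b.+1.
  by rewrite big_distrl; apply: eq_bigr => j _; rewrite /= expnS mulnCA mulnC.
have IHs := IH (fun n => d n.+1) (fun n => d_le n.+1) (fun n h => d_eq0 n.+1 h).
case: i => [|i].
  by rewrite /digit expn0 divn1 addnC modnMDl modn_small ?ltnS.
rewrite /digit expnS divnMA addnC divnMDl // (@divn_small (d 0)) ?ltnS // addn0.
exact: IHs.
Qed.

End Digits.

Lemma fmultiset_eq0_large (f : fmultiset) :
  exists N, forall n, N <= n -> f n = 0.
Proof.
exists (\max_(i <- finsupp f) i).+1 => n lt_n; apply/eqP.
apply: contraTT lt_n; rewrite -mem_finsupp -ltnNge ltnS => n_supp.
exact: (@leq_bigmax_seq _ _ predT id).
Qed.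

Lemma betaE (b N : nat) (f : fmultiset) :
  (forall n, N <= n -> f n = 0) ->
  beta b f = \sum_(n < N) f n * b.+1 ^ n.
Proof.
move=> f_eq0; rewrite /beta -(big_mkord predT (fun n => f n * b.+1 ^ n)) /index_iota subn0.
rewrite [RHS](bigID (mem (finsupp f))) /= [X in _ + X]big1 ?addn0; last first.
  by move=> n; rewrite mem_finsupp negbK => /eqP ->.
rewrite -[RHS]big_filter; apply/perm_big/uniq_perm.
- exact: fset_uniq.
- by rewrite filter_uniq // iota_uniq.
move=> n; rewrite mem_filter mem_iota add0n /=.
case: (boolP (n \in finsupp f)) => //= n_supp; apply/esym; rewrite ltnNge.
by apply: contraL n_supp => /f_eq0 f_n0; rewrite mem_finsupp f_n0.
Qed.

Lemma digit_beta (b : nat) (f : fmultiset) : inMb b f ->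
  digit b (beta b f) =1 f.
Proof.
move=> f_le; have [N f_eq0] := fmultiset_eq0_large f.
by rewrite (betaE b f_eq0); apply: digit_of_expansion.
Qed.

Definition maxmin_conv (u v : nat -> nat) (n : nat) : nat :=
  \max_(i < n.+1) minn (u i) (v (n - i)).

Section MaxMinConvolution.

Implicit Types (u v : nat -> nat).

Lemma eq_maxmin_conv u u' v v' :
  u =1 u' -> v =1 v' -> maxmin_conv u v =1 maxmin_conv u' v'.
Proof. by move=> eq_u eq_v n; apply: eq_bigr => i _; rewrite eq_u eq_v. Qed.

Lemma maxmin_convC u v : maxmin_conv u v =1 maxmin_conv v u.
Proof.
move=> n; rewrite /maxmin_conv (reindex_inj rev_ord_inj) /=.
by apply: eq_bigr => i _; rewrite subSS subKn 1?minnC // -ltnS.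
Qed.

Lemma maxmin_conv_le (b : nat) u v n :
  (forall i, u i <= b) -> maxmin_conv u v n <= b.
Proof.
by move=> u_le; apply/bigmax_leqP => i _; rewrite geq_min u_le.
Qed.

Lemma maxmin_conv_eq0 (x y : nat) u v n :
  (forall i, x <= i -> u i = 0) -> (forall j, y <= j -> v j = 0) ->
  x + y <= n -> maxmin_conv u v n = 0.
Proof.
move=> u_eq0 v_eq0 le_n; apply/eqP; rewrite -leqn0.
apply/bigmax_leqP => i _; rewrite leqn0; have le_in := ltn_ord i.
have [le_xi|lt_ix] := leqP x i; first by rewrite u_eq0 ?min0n.
by rewrite v_eq0 ?minn0 //; lia.
Qed.

Lemma maxmin_conv_unitl (b : nat) v n : v n <= b ->
  maxmin_conv (fun i => if i == 0 then b else 0) v n = v n.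
Proof.
move=> le_vn; rewrite /maxmin_conv big_ord_recl /= subn0 big1 ?maxn0.
  exact/minn_idPr.
by move=> i _; rewrite min0n.
Qed.

End MaxMinConvolution.

Lemma in_sumset_set_array (f g : fmultiset) (i n : nat) : 0 < i ->
  in_sumset (set_array f i) (set_array g i) n = (i <= maxmin_conv f g n).
Proof.
move=> i_gt0; rewrite /in_sumset /set_array.
apply/existsP/idP => [[s /andP[le_f le_g]]|].
  by apply: leq_trans (leq_bigmax s); rewrite leq_min le_f le_g.
move=> le_i; apply/existsP; apply: contraTT le_i.
rewrite -ltnNge => /existsPn no_s.
suff : maxmin_conv f g n <= i.-1 by lia.
apply/bigmax_leqP => s _; move: (no_s s).
by rewrite negb_and -!ltnNge => /orP[] lt_i; lia.
Qed.

Lemma sum_leq_minn (b m : nat) : \sum_(1 <= i < b.+1) (i <= m) = minn m b.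
Proof.
elim: b => [|b IH]; first by rewrite big_geq // minn0.
by rewrite big_nat_recr //= IH; case: leqP => le_m; lia.
Qed.

Lemma ms_addE (b : nat) (f g : fmultiset) : inMb b f ->
  ms_add b f g =1 maxmin_conv f g.
Proof.
move=> f_le n; rewrite /ms_add fsfunE; case: ifP => [_|n_supp].
  under eq_big_nat => i /andP[i_gt0 _] do rewrite in_sumset_set_array //.
  by rewrite sum_leq_minn; apply/minn_idPl/maxmin_conv_le.
apply/esym/eqP; rewrite -leqn0; apply/bigmax_leqP => s _; rewrite leqn0.
apply: contraFT n_supp => min_s; have le_sn : s <= n by rewrite -ltnS.
rewrite -(subnKC le_sn); apply: in_imfset2; rewrite /= mem_finsupp.
- by apply: contraNneq min_s => ->; rewrite min0n.
- by apply: contraNneq min_s => ->; rewrite minn0.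
Qed.

Lemma ms_unitE (b n : nat) : ms_unit b n = if n == 0 then b else 0.
Proof. by rewrite /ms_unit fsfunE inE. Qed.

Lemma ms_add_inMb (b : nat) (f g : fmultiset) :
  inMb b f -> inMb b (ms_add b f g).
Proof. by move=> f_le a; rewrite ms_addE //; apply: maxmin_conv_le. Qed.

Lemma ms_unit_inMb (b : nat) : inMb b (ms_unit b).
Proof. by move=> a; rewrite ms_unitE; case: ifP. Qed.

Lemma beta_ms_unit (b : nat) : beta b (ms_unit b) = b.
Proof.
rewrite (@betaE b 1) => [|[|n] //]; first by rewrite big_ord1 ms_unitE muln1.
by rewrite ms_unitE.
Qed.

Lemma beta_ms_add (b : nat) (f g : fmultiset) : inMb b f -> inMb b g ->
  beta b (ms_add b f g) = lunar_mul b (beta b f) (beta b g).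
Proof.
move=> f_le g_le; set x := beta b f; set y := beta b g.
have add_digits : ms_add b f g =1 maxmin_conv (digit b x) (digit b y).
  by move=> n; rewrite ms_addE //; apply: eq_maxmin_conv => i;
    apply/esym/digit_beta.
rewrite (@betaE b (x + y).+1 (ms_add b f g)) => [|n lt_n]; last first.
  rewrite add_digits; apply: (@maxmin_conv_eq0 x y);
    [exact: digit_eq0 | exact: digit_eq0 | exact: ltnW].
by apply: eq_bigr => n _; rewrite add_digits.
Qed.

Lemma lunar_mulC (b x y : nat) : lunar_mul b x y = lunar_mul b y x.
Proof.
rewrite /lunar_mul addnC; apply: eq_bigr => n _.
by rewrite -[LHS]/(maxmin_conv _ _ n * _) maxmin_convC.
Qed.

Lemma lunar_mul1n (b x : nat) : 0 < b -> lunar_mul b b x = x.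
Proof.
move=> b_gt0; rewrite /lunar_mul -[RHS](@sum_digit_expansion b (b + x).+1).
  apply: eq_bigr => n _; congr (_ * _).
  rewrite -[LHS]/(maxmin_conv _ _ n) (eq_maxmin_conv (digit_self b) (frefl _)).
  exact/maxmin_conv_unitl/digit_le.
have base_gt1 : 1 < b.+1 := b_gt0.
by rewrite (leq_trans (ltn_expl x base_gt1)) // leq_exp2l // leqW ?leq_addl.
Qed.

Theorem mainTheorem11 (b : nat) (hb : (1 <= b)%N) :
  (forall f g : fmultiset, inMb b f -> inMb b g ->
     inMb b (ms_add b f g) /\
     beta b (ms_add b f g) = lunar_mul b (beta b f) (beta b g)) /\
  inMb b (ms_unit b) /\
  beta b (ms_unit b) = b /\
  (forall x : nat, lunar_mul b b x = x /\ lunar_mul b x b = x).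
Proof.
split; [|split; [|split]].
- move=> f g f_le g_le.
  by split; [apply: ms_add_inMb | apply: beta_ms_add].
- exact: ms_unit_inMb.
- exact: beta_ms_unit.
- by move=> x; split; last rewrite lunar_mulC; apply: lunar_mul1n.
Qed.
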